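(* Let $(\mathfrak S_A,\mathfrak E_A,\epsilon^{\mathfrak S_A})$ and $(\mathfrak S_B,\mathfrak E_B,\epsilon^{\mathfrak S_B})$ be States/Effects Chu spaces whose spaces of states admit a description in terms of pure states. Then the set of completely meet-irreducible elements of $\mathfrak S_A\widetilde{\otimes}\mathfrak S_B$ equals $$\{\sigma_A\widetilde{\otimes}\sigma_B\mid\sigma_A\in\mathfrak S_A^{pure},\ \sigma_B\in\mathfrak S_B^{pure}\},$$ and this set equals the set of maximal elements of $\mathfrak S_A\widetilde{\otimes}\mathfrak S_B$.
   Context: The boolean domain is $\mathfrak{B}=\{Y,N,\bot\}$, ordered by $u\le v$ iff $u=\bot$ or $u=v$; nonempty infima $\bigwedge$: $Y$ (resp. $N$) if all members are $Y$ (resp. $N$), else $\bot$. Product $\bullet$: $x\bullet Y=x$, $x\bullet N=N$, $\bot\bullet\bot=\bot$ (commutative); involution $\overline{\bot}=\bot$, $\overline{Y}=N$, $\overline{N}=Y$. A space of states is a poset $(\mathfrak S,\sqsubseteq)$ with bottom $\bot_{\mathfrak S}$ in which every nonempty subset has an infimum. The natural space of effects $\mathfrak E_{\mathfrak S}$ consists of formal symbols $\mathfrak l_{(\sigma,\sigma')}$ ($\sigma,\sigma'$ with no common upper bound), $\mathfrak l_{(\sigma,\cdot)}$, $\mathfrak l_{(\cdot,\sigma)}$, $\mathfrak l_{(\cdot,\cdot)}$, with evaluation $\epsilon_{\mathfrak l_{(a,b)}}(\sigma)=Y$ if $a\sqsubseteq\sigma$, $N$ if $b\sqsubseteq\sigma$,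 $\bot$ otherwise (''$\cdot\sqsubseteq\sigma$'' false), ordered by pointwise comparison of evaluations (nonempty infima exist and are pointwise). $\overline{\mathfrak l_{(a,b)}}=\mathfrak l_{(b,a)}$, $\mathfrak Y_{\mathfrak E}=\mathfrak l_{(\bot_{\mathfrak S},\cdot)}$, $\bot_{\mathfrak E}=\mathfrak l_{(\cdot,\cdot)}$. A States/Effects Chu space $(\mathfrak S,\mathfrak E,\epsilon)$: $\mathfrak E\subseteq\mathfrak E_{\mathfrak S}$ such that (i) each $\sigma\ne\bot_{\mathfrak S}$ has some $\sigma'\ne\bot_{\mathfrak S}$ with $\mathfrak l_{(\sigma,\sigma')}\in\mathfrak E$; (ii) $\mathfrak E$ is closed under nonempty infima of $\mathfrak E_{\mathfrak S}$; (iii) closed under bar; (iv) contains $\mathfrak Y_{\mathfrak E},\bot_{\mathfrak E}$. $\mathfrak S$ admits a description in terms of pure states if its set $\mathfrak S^{pure}$ of completely meet-irreducible elements equals its set of maximal elements and every $\sigma$ is the infimum of the pure states above it. The pure tensor $\sigma_A\widetilde{\otimes}\sigma_B$ is the map $\mathfrak E_A\times\mathfrak E_B\to\mathfrak B$, $(\mathfrak l_A,\mathfrak l_B)\mapsto\epsilon^{\mathfrak S_A}_{\mathfrak l_A}(\sigma_A)\bullet\epsilon^{\mathfrak S_B}_{\mathfrak l_B}(\sigma_B)$; the minimal tensor product $\mathfrak S_A\widetilde{\otimes}\mathfrak S_B$ is the set of pointwise infima of nonempty families of pure tensors, ordered pointwise (it is closed under infima of nonempty subsets). *)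

From Stdlib Require Import Classical ClassicalDescription.



Inductive B3 : Type := BY | BN | Bbot.

Definition leB (u v : B3) : Prop := u = Bbot \/ u = v.

Definition prodB (x y : B3) : B3 :=
  match x, y with
  | _, BY => x
  | _, BN => BN
  | BY, Bbot => Bbot
  | BN, Bbot => BN
  | Bbot, Bbot => Bbot
  end.

Definition barB (x : B3) : B3 :=
  match x with BY => BN | BN => BY | Bbot => Bbot end.

Section Order.
Variable X : Type.
Variable D : X -> Prop.
Variable le : X -> X -> Prop.

Definition is_lb (Y : X -> Prop) (x : X) : Prop := forall y, Y y -> le x y.

Definition is_glb_in (Y : X -> Prop) (x : X) : Prop :=
  D x /\ is_lb Y x /\ (forall z, D z -> is_lb Y z -> le z x).

(** completely meet-irreducible in D: whenever x is the infimum (in D) of a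
    subset Y of D (Y possibly empty), x belongs to Y *)
Definition cmi_in (x : X) : Prop :=
  D x /\ forall Y : X -> Prop, (forall y, Y y -> D y) -> is_glb_in Y x -> Y x.

Definition maximal_in (x : X) : Prop :=
  D x /\ forall y, D y -> le x y -> y = x.
End Order.
Arguments is_lb {X}.
Arguments is_glb_in {X}.
Arguments cmi_in {X}.
Arguments maximal_in {X}.

Definition everything {X : Type} : X -> Prop := fun _ => True.

Definition is_state_space {S : Type} (le : S -> S -> Prop) (bot : S) : Prop :=
  (forall x, le x x) /\
  (forall x y z, le x y -> le y z -> le x z) /\
  (forall x y, le x y -> le y x -> x = y) /\
  (forall x, le bot x) /\
  (forall Y : S -> Prop, (exists y, Y y) -> exists x, is_glb_in everything le Y x).

Definition pure {S : Type} (le : S -> S -> Prop) (s : S) : Prop :=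
  cmi_in everything le s.

Definition maximal {S : Type} (le : S -> S -> Prop) (s : S) : Prop :=
  maximal_in everything le s.

Definition pure_description {S : Type} (le : S -> S -> Prop) : Prop :=
  (forall s, pure le s <-> maximal le s) /\
  (forall s, is_glb_in everything le (fun p => pure le p /\ le s p) s).

(** The formal symbol l_(a,b), where [None] stands for the dot. *)
Inductive eff_sym (S : Type) : Type := Eff (a b : option S).
Arguments Eff {S} a b.

Definition eff_valid {S : Type} (le : S -> S -> Prop) (e : eff_sym S) : Prop :=
  match e with
  | Eff (Some s) (Some s') => ~ exists u, le s u /\ le s' u
  | _ => True
  end.

Definition decP (P : Prop) : bool :=
  if excluded_middle_informative P then true else false.

Definition eval {S : Type} (le : S -> S -> Prop) (e : eff_sym S) (s : S) : B3 :=
  match e with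
  | Eff a b =>
      let yes := match a with Some x => decP (le x s) | None => false end in
      let no := match b with Some y => decP (le y s) | None => false end in
      if yes then BY else if no then BN else Bbot
  end.

Definition eff_le {S : Type} (le : S -> S -> Prop) (e f : eff_sym S) : Prop :=
  forall s, leB (eval le e s) (eval le f s).

Definition eff_bar {S : Type} (e : eff_sym S) : eff_sym S :=
  match e with Eff a b => Eff b a end.

Definition is_chu {S : Type} (le : S -> S -> Prop) (bot : S)
    (E : eff_sym S -> Prop) : Prop :=
  (forall e, E e -> eff_valid le e) /\
  (forall s, s <> bot -> exists s', s' <> bot /\ E (Eff (Some s) (Some s'))) /\
  (forall (F : eff_sym S -> Prop) e,
      (forall f, F f -> E f) -> (exists f, F f) ->
      is_glb_in (eff_valid le) (eff_le le) F e -> E e) /\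
  (forall e, E e -> E (eff_bar e)) /\
  E (Eff (Some bot) None) /\ E (Eff None None).

Definition tens {SA SB : Type} (EA : eff_sym SA -> Prop) (EB : eff_sym SB -> Prop)
  : Type := {e | EA e} -> {f | EB f} -> B3.

Definition pure_tensor {SA SB : Type} (leA : SA -> SA -> Prop) (leB' : SB -> SB -> Prop)
    (EA : eff_sym SA -> Prop) (EB : eff_sym SB -> Prop) (sA : SA) (sB : SB)
  : tens EA EB :=
  fun e f => prodB (eval leA (proj1_sig e) sA) (eval leB' (proj1_sig f) sB).

Definition tens_le {SA SB : Type} {EA : eff_sym SA -> Prop} {EB : eff_sym SB -> Prop}
    (t u : tens EA EB) : Prop :=
  forall e f, leB (t e f) (u e f).

Definition in_min_tensor {SA SB : Type} (leA : SA -> SA -> Prop) (leB' : SB -> SB -> Prop)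
    (EA : eff_sym SA -> Prop) (EB : eff_sym SB -> Prop) (t : tens EA EB) : Prop :=
  exists F : SA -> SB -> Prop, (exists sA sB, F sA sB) /\
    forall e f, is_glb_in everything leB
                  (fun v => exists sA sB, F sA sB /\ v = pure_tensor leA leB' EA EB sA sB e f)
                  (t e f).

(* The order between pure tensors reflects the orders of the factors: effect (i) of a Chu
   space tests [s ≤ _], and pairing it with the unit effect [l_(⊥,·)] on the other side reads
   that test off [s ⊗ t ≤ p ⊗ q].  So tensors of pure (= maximal) states are maximal, and every
   element, lying below some [a ⊗ b ≤ p ⊗ q] with [p], [q] pure, is below one of them.
   Every element is also the infimum of the pure tensors above it, and [a ⊗ b] is the infimum
   of the [p ⊗ q] with pure [p ≥ a], [q ≥ b], because an effect that is constant and defined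
   on a family takes the same value on its infimum; hence completely meet-irreducible elements
   are tensors of pure states.  Conversely [p ⊗ q], being maximal, is the infimum only of
   families containing it, or of the empty family, which would make [p] the top state and
   contradict its irreducibility. *)
From Stdlib Require Import Classical ClassicalDescription FunctionalExtensionality.

Lemma leB_trans x y z : leB x y -> leB y z -> leB x z.
Proof. unfold leB; intros [H | H] [H' | H']; subst; auto. Qed.

Lemma leB_antisym x y : leB x y -> leB y x -> x = y.
Proof. unfold leB; intros [H | H] [H' | H']; subst; auto. Qed.

Lemma leB_nonbot c v : leB c v -> c <> Bbot -> v = c.
Proof. unfold leB; intros [H | H] Hc; subst; congruence. Qed.

Lemma prodB_mono x x' y y' : leB x x' -> leB y y' -> leB (prodB x y) (prodB x' y').
Proof. unfold leB; destruct x, x', y, y'; simpl; intuition discriminate. Qed.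

Lemma prodB_Y x y : prodB x y = BY -> x = BY /\ y = BY.
Proof. destruct x, y; simpl; intuition discriminate. Qed.

Lemma prodB_N x y : prodB x y = BN -> x = BN \/ y = BN.
Proof. destruct x, y; simpl; intuition discriminate. Qed.

Lemma tens_le_trans {SA SB} {EA : eff_sym SA -> Prop} {EB : eff_sym SB -> Prop}
  (t u w : tens EA EB) : tens_le t u -> tens_le u w -> tens_le t w.
Proof. intros Htu Huw e f; eapply leB_trans; eauto. Qed.

Lemma tens_le_antisym {SA SB} {EA : eff_sym SA -> Prop} {EB : eff_sym SB -> Prop}
  (t u : tens EA EB) : tens_le t u -> tens_le u t -> t = u.
Proof.
  intros Htu Hut; apply functional_extensionality; intro e.
  apply functional_extensionality; intro f; apply leB_antisym; auto.
Qed.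

Section OrderFacts.
Context {X : Type} (D : X -> Prop) (le : X -> X -> Prop).

Lemma maximal_in_glb_mem x Y y :
  maximal_in D le x -> is_glb_in D le Y x -> (forall y, Y y -> D y) -> Y y -> Y x.
Proof.
  intros [_ Hmax] [_ [Hlb _]] HY Yy.
  rewrite <- (Hmax y (HY y Yy) (Hlb y Yy)); exact Yy.
Qed.

Lemma cmi_in_not_top x : cmi_in D le x -> ~ (forall z, D z -> le z x).
Proof.
  intros [Dx Hcmi] Htop.
  apply (Hcmi (fun _ => False)); [tauto|].
  split; [exact Dx | split; [intros _ []|]].
  intros z Dz _; exact (Htop z Dz).
Qed.
End OrderFacts.

Section StateSpace.
Context {S : Type} {le : S -> S -> Prop} {bot : S}.
Hypothesis hS : is_state_space le bot.

Lemma state_le_refl x : le x x.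
Proof. exact (proj1 hS x). Qed.

Lemma state_le_trans x y z : le x y -> le y z -> le x z.
Proof. exact (proj1 (proj2 hS) x y z). Qed.

Lemma state_le_antisym x y : le x y -> le y x -> x = y.
Proof. exact (proj1 (proj2 (proj2 hS)) x y). Qed.

Lemma state_bot_le x : le bot x.
Proof. exact (proj1 (proj2 (proj2 (proj2 hS))) x). Qed.

Hypothesis hP : pure_description le.

Lemma pure_state_maximal p q : pure le p -> le p q -> q = p.
Proof. intros Pp; apply (proj1 hP p) in Pp as [_ Hmax]; exact (Hmax q I). Qed.

(* If no pure state lay above [s], then [s] would be the infimum of the empty family,
   i.e. the top state, hence maximal, hence pure. *)
Lemma exists_pure_above s : exists p, pure le p /\ le s p.
Proof.
  apply NNPP; intro Hnone.
  assert (Hmax : maximal le s).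
  { split; [exact I|]. intros y _ Hsy.
    apply state_le_antisym; [|exact Hsy].
    apply (proj2 (proj2 (proj2 hP s))); [exact I|].
    intros p Pp; exfalso; eauto. }
  apply Hnone; exists s; split; [apply (proj2 (proj1 hP s) Hmax) | apply state_le_refl].
Qed.
End StateSpace.

Section Evaluation.
Context {S : Type} (le : S -> S -> Prop).

Definition opt_le (a : option S) (s : S) : Prop :=
  match a with Some x => le x s | None => False end.

Lemma eval_Eff a b s :
  eval le (Eff a b) s =
  if decP (opt_le a s) then BY else if decP (opt_le b s) then BN else Bbot.
Proof.
  assert (decP_False : decP False = false).
  { unfold decP; destruct (excluded_middle_informative False); tauto. }
  destruct a, b; simpl; rewrite ?decP_False; reflexivity.
Qed.

Lemma eval_Y a b s : eval le (Eff a b) s = BY <-> opt_le a s.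
Proof.
  rewrite eval_Eff; unfold decP.
  destruct (excluded_middle_informative (opt_le a s));
    destruct (excluded_middle_informative (opt_le b s)); intuition discriminate.
Qed.

Lemma eval_N a b s : eval le (Eff a b) s = BN <-> ~ opt_le a s /\ opt_le b s.
Proof.
  rewrite eval_Eff; unfold decP.
  destruct (excluded_middle_informative (opt_le a s));
    destruct (excluded_middle_informative (opt_le b s)); intuition discriminate.
Qed.

Hypothesis le_trans : forall x y z, le x y -> le y z -> le x z.

Lemma opt_le_trans a s p : opt_le a s -> le s p -> opt_le a p.
Proof. destruct a; simpl; eauto. Qed.

Lemma eval_mono e s p : eff_valid le e -> le s p -> leB (eval le e s) (eval le e p).
Proof.
  destruct e as [a b]; intros Hvalid Hsp.
  destruct (eval le (Eff a b) s) eqn:Es; [right..|left; reflexivity]; symmetry.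
  - apply eval_Y in Es; apply eval_Y; eapply opt_le_trans; eauto.
  - apply eval_N in Es as [Hna Hb]; apply eval_N; split; [|eapply opt_le_trans; eauto].
    destruct a as [x|]; [|tauto]; destruct b as [y|]; [|contradiction].
    intro Hxp; apply Hvalid; exists p; split; [exact Hxp | eapply le_trans; eauto].
Qed.

Lemma opt_le_glb P s a :
  is_glb_in everything le P s -> (exists p, P p) -> (forall p, P p -> opt_le a p) ->
  opt_le a s.
Proof.
  intros [_ [_ Hglb]] [p0 Pp0] Hall.
  destruct a as [x|]; [|exact (Hall p0 Pp0)].
  apply Hglb; [exact I | exact Hall].
Qed.

Lemma eval_glb_const P s e c :
  is_glb_in everything le P s -> (exists p, P p) ->
  (forall p, P p -> eval le e p = c) -> c <> Bbot -> eval le e s = c.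
Proof.
  destruct e as [a b]; intros Hs [p0 Pp0] Hall Hc.
  destruct c; [| |contradiction].
  - apply eval_Y, (opt_le_glb P); eauto.
    intros p Pp; apply (eval_Y a b p), Hall, Pp.
  - apply eval_N; split.
    + intro Ha; apply (eval_N a b p0); [exact (Hall p0 Pp0)|].
      eapply opt_le_trans; [exact Ha | apply (proj1 (proj2 Hs)), Pp0].
    + apply (opt_le_glb P); eauto.
      intros p Pp; apply (eval_N a b p), Hall, Pp.
Qed.
End Evaluation.

Section ChuSpace.
Context {S : Type} {le : S -> S -> Prop} {bot : S} {E : eff_sym S -> Prop}.
Hypotheses (hS : is_state_space le bot) (hE : is_chu le bot E).

Lemma chu_valid e : E e -> eff_valid le e.
Proof. exact (proj1 hE e). Qed.

Lemma chu_unit_effect : exists f, E f /\ forall p, eval le f p = BY.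
Proof.
  exists (Eff (Some bot) None); split; [exact (proj1 (proj2 (proj2 (proj2 (proj2 hE)))))|].
  intro p; apply eval_Y, (state_bot_le hS).
Qed.

Lemma chu_test_effect s :
  exists e, E e /\ eval le e s = BY /\ forall p, eval le e p = BY -> le s p.
Proof.
  destruct (classic (s = bot)) as [->|Hs].
  - destruct chu_unit_effect as [f [Ef Hf]].
    exists f; repeat split; auto; intros p _; apply (state_bot_le hS).
  - destruct (proj1 (proj2 hE) s Hs) as [s' [_ Es']].
    exists (Eff (Some s) (Some s')); repeat split; [exact Es' | apply eval_Y, (state_le_refl hS) |].
    intros p Hp; exact (proj1 (eval_Y le _ _ p) Hp).
Qed.
End ChuSpace.

Section MinimalTensor.
Context {SA : Type} {leA : SA -> SA -> Prop} {botA : SA} {EA : eff_sym SA -> Prop}.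
Context {SB : Type} {leB' : SB -> SB -> Prop} {botB : SB} {EB : eff_sym SB -> Prop}.
Hypotheses (hSA : is_state_space leA botA) (hSB : is_state_space leB' botB).
Hypotheses (hEA : is_chu leA botA EA) (hEB : is_chu leB' botB EB).
Hypotheses (pA : pure_description leA) (pB : pure_description leB').

Local Notation pt := (pure_tensor leA leB' EA EB).
Local Notation D := (in_min_tensor leA leB' EA EB).

Lemma pure_tensor_in_min_tensor a b : D (pt a b).
Proof.
  exists (fun x y => x = a /\ y = b); split; [exists a, b; auto|].
  intros e f; split; [exact I | split].
  - intros v [x [y [[-> ->] ->]]]; right; reflexivity.
  - intros z _ Hz; apply Hz; exists a, b; auto.
Qed.

Lemma min_tensor_le_pure_tensor t : D t -> exists a b, tens_le t (pt a b).
Proof.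
  intros [F [[a [b Fab]] Hglb]]; exists a, b; intros e f.
  apply (proj1 (proj2 (Hglb e f))); exists a, b; auto.
Qed.

Lemma pure_tensor_le_mono a b p q : leA a p -> leB' b q -> tens_le (pt a b) (pt p q).
Proof.
  intros Hap Hbq e f; apply prodB_mono.
  - apply (eval_mono leA (state_le_trans hSA)); [apply (chu_valid hEA), proj2_sig | exact Hap].
  - apply (eval_mono leB' (state_le_trans hSB)); [apply (chu_valid hEB), proj2_sig | exact Hbq].
Qed.

Lemma pure_tensor_le_l a b p q : tens_le (pt a b) (pt p q) -> leA a p.
Proof.
  intros Hle.
  destruct (chu_test_effect hSA hEA a) as [e [Ee [Hea Htest]]].
  destruct (chu_unit_effect hSB hEB) as [f [Ef Hunit]].
  specialize (Hle (exist _ e Ee) (exist _ f Ef)); unfold pure_tensor in Hle; simpl in Hle.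
  rewrite Hea, !Hunit in Hle; apply leB_nonbot in Hle; [|discriminate].
  exact (Htest p (proj1 (prodB_Y _ _ Hle))).
Qed.

Lemma pure_tensor_le_r a b p q : tens_le (pt a b) (pt p q) -> leB' b q.
Proof.
  intros Hle.
  destruct (chu_unit_effect hSA hEA) as [e [Ee Hunit]].
  destruct (chu_test_effect hSB hEB b) as [f [Ef [Hfb Htest]]].
  specialize (Hle (exist _ e Ee) (exist _ f Ef)); unfold pure_tensor in Hle; simpl in Hle.
  rewrite Hfb, !Hunit in Hle; apply leB_nonbot in Hle; [|discriminate].
  exact (Htest q (proj2 (prodB_Y _ _ Hle))).
Qed.

Lemma pure_tensor_maximal sA sB :
  pure leA sA -> pure leB' sB -> maximal_in D tens_le (pt sA sB).
Proof.
  intros HA HB; split; [apply pure_tensor_in_min_tensor|].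
  intros t Dt Hle.
  destruct (min_tensor_le_pure_tensor t Dt) as [a [b Hab]].
  assert (Hpt := tens_le_trans _ _ _ Hle Hab).
  rewrite (pure_state_maximal pA sA a HA (pure_tensor_le_l _ _ _ _ Hpt)) in Hab.
  rewrite (pure_state_maximal pB sB b HB (pure_tensor_le_r _ _ _ _ Hpt)) in Hab.
  apply tens_le_antisym; assumption.
Qed.

Lemma maximal_is_pure_tensor t :
  maximal_in D tens_le t -> exists p q, pure leA p /\ pure leB' q /\ t = pt p q.
Proof.
  intros [Dt Hmax].
  destruct (min_tensor_le_pure_tensor t Dt) as [a [b Hab]].
  destruct (exists_pure_above hSA pA a) as [p [Pp Hap]].
  destruct (exists_pure_above hSB pB b) as [q [Pq Hbq]].
  exists p, q; split; [exact Pp | split; [exact Pq | symmetry]].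
  apply Hmax; [apply pure_tensor_in_min_tensor|].
  eapply tens_le_trans; [exact Hab | apply pure_tensor_le_mono; assumption].
Qed.

Lemma min_tensor_glb_pure_tensors_above t :
  D t -> is_glb_in D tens_le (fun u => exists a b, tens_le t (pt a b) /\ u = pt a b) t.
Proof.
  intros Dt; split; [exact Dt | split].
  - intros u [a [b [Hle ->]]]; exact Hle.
  - destruct Dt as [F [_ Hglb]]; intros z _ Hz e f.
    apply (proj2 (proj2 (Hglb e f))); [exact I|].
    intros v [a [b [Fab ->]]].
    apply (Hz (pt a b)); exists a, b; split; [|reflexivity].
    intros e' f'; apply (proj1 (proj2 (Hglb e' f'))); exists a, b; auto.
Qed.

Lemma prodB_eval_pure_above e f a b c :
  c <> Bbot ->
  (forall p q, pure leA p -> leA a p -> pure leB' q -> leB' b q ->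
     prodB (eval leA e p) (eval leB' f q) = c) ->
  prodB (eval leA e a) (eval leB' f b) = c.
Proof.
  intros Hc Hall.
  destruct (exists_pure_above hSA pA a) as [p0 [Pp0 Hap0]].
  destruct (exists_pure_above hSB pB b) as [q0 [Pq0 Hbq0]].
  pose proof (eval_glb_const leA (state_le_trans hSA) _ a e c (proj2 pA a)) as HglbA.
  pose proof (eval_glb_const leB' (state_le_trans hSB) _ b f c (proj2 pB b)) as HglbB.
  destruct c; [| |contradiction].
  - rewrite HglbA, HglbB; eauto.
    + intros q [Pq Hbq]; exact (proj2 (prodB_Y _ _ (Hall p0 q Pp0 Hap0 Pq Hbq))).
    + intros p [Pp Hap]; exact (proj1 (prodB_Y _ _ (Hall p q0 Pp Hap Pq0 Hbq0))).
  - destruct (classic (forall p, pure leA p /\ leA a p -> eval leA e p = BN)) as [HN|HN].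
    + rewrite HglbA; eauto; destruct (eval leB' f b); reflexivity.
    + apply not_all_ex_not in HN as [p1 Hp1]; apply imply_to_and in Hp1 as [[Pp1 Hap1] Hne].
      rewrite HglbB; eauto; [destruct (eval leA e a); reflexivity|].
      intros q [Pq Hbq].
      destruct (prodB_N _ _ (Hall p1 q Pp1 Hap1 Pq Hbq)); [contradiction | assumption].
Qed.

Lemma pure_tensor_glb_pure_above a b :
  is_glb_in D tens_le
    (fun u => exists p q, pure leA p /\ leA a p /\ pure leB' q /\ leB' b q /\ u = pt p q)
    (pt a b).
Proof.
  split; [apply pure_tensor_in_min_tensor | split].
  - intros u [p [q [_ [Hap [_ [Hbq ->]]]]]]; apply pure_tensor_le_mono; assumption.
  - intros z _ Hz e f.
    destruct (z e f) eqn:Ez; [right..|left; reflexivity]; symmetry;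
      (apply prodB_eval_pure_above; [discriminate|]);
      intros p q Pp Hap Pq Hbq; (apply leB_nonbot; [|discriminate]);
      rewrite <- Ez; apply (Hz (pt p q)); exists p, q; auto.
Qed.

Lemma cmi_is_pure_tensor t :
  cmi_in D tens_le t -> exists p q, pure leA p /\ pure leB' q /\ t = pt p q.
Proof.
  intros [Dt Hcmi].
  destruct (Hcmi (fun u => exists a b, tens_le t (pt a b) /\ u = pt a b)) as [a [b [_ ->]]].
  { intros u [a [b [_ ->]]]; apply pure_tensor_in_min_tensor. }
  { apply min_tensor_glb_pure_tensors_above, Dt. }
  destruct (Hcmi (fun u => exists p q, pure leA p /\ leA a p /\ pure leB' q /\ leB' b q /\
                                       u = pt p q)) as [p [q [Pp [_ [Pq [_ ->]]]]]].
  { intros u [p [q [_ [_ [_ [_ ->]]]]]]; apply pure_tensor_in_min_tensor. }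
  { apply pure_tensor_glb_pure_above. }
  exists p, q; auto.
Qed.

Lemma pure_tensor_cmi sA sB : pure leA sA -> pure leB' sB -> cmi_in D tens_le (pt sA sB).
Proof.
  intros HA HB; split; [apply pure_tensor_in_min_tensor|].
  intros Y HY Hglb.
  destruct (classic (exists y, Y y)) as [[y Yy]|Hempty].
  - exact (maximal_in_glb_mem D tens_le _ _ _ (pure_tensor_maximal sA sB HA HB) Hglb HY Yy).
  - exfalso; apply (cmi_in_not_top everything leA sA HA); intros s _.
    destruct (exists_pure_above hSA pA s) as [p [Pp Hsp]].
    assert (Htop : tens_le (pt p sB) (pt sA sB)).
    { apply (proj2 (proj2 Hglb)); [apply pure_tensor_in_min_tensor|].
      intros y Yy; exfalso; eauto. }
    rewrite (pure_state_maximal pA p sA Pp (pure_tensor_le_l _ _ _ _ Htop)); exact Hsp.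
Qed.
End MinimalTensor.

Theorem mainTheorem6
  (SA : Type) (leA : SA -> SA -> Prop) (botA : SA) (EA : eff_sym SA -> Prop)
  (SB : Type) (leB' : SB -> SB -> Prop) (botB : SB) (EB : eff_sym SB -> Prop)
  (hSA : is_state_space leA botA) (hSB : is_state_space leB' botB)
  (hEA : is_chu leA botA EA) (hEB : is_chu leB' botB EB)
  (pA : pure_description leA) (pB : pure_description leB') :
  (forall t : tens EA EB,
     cmi_in (in_min_tensor leA leB' EA EB) tens_le t <->
     exists sA sB, pure leA sA /\ pure leB' sB /\ t = pure_tensor leA leB' EA EB sA sB) /\
  (forall t : tens EA EB,
     maximal_in (in_min_tensor leA leB' EA EB) tens_le t <->
     exists sA sB, pure leA sA /\ pure leB' sB /\ t = pure_tensor leA leB' EA EB sA sB).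
Proof.
  split; intro t; split.
  - exact (cmi_is_pure_tensor hSA hSB hEA hEB pA pB t).
  - intros [sA [sB [HA [HB ->]]]]; exact (pure_tensor_cmi hSA hSB hEA hEB pA pB sA sB HA HB).
  - exact (maximal_is_pure_tensor hSA hSB hEA hEB pA pB t).
  - intros [sA [sB [HA [HB ->]]]]; exact (pure_tensor_maximal hSA hSB hEA hEB pA pB sA sB HA HB).
Qed.
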